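(* Let $1\le N_a<N_b$, $\mathcal N=N_a+N_b$, real $\kappa_1<\dots<\kappa_{\mathcal N}$ with indices taken modulo $\mathcal N$. For $q=(q_1,q_2)\in\mathbb R^2$ define $q_{mn}=q_2-(\kappa_m+\kappa_n)q_1+\kappa_m\kappa_n$, $\widetilde q_{mn}=(\kappa_m-\kappa_n)q_{mn}$, and $\rho_k(q)=\theta(\widetilde q_{k,k-N_a})\,\theta(\widetilde q_{k+N_a,k})$, where $\theta$ is the Heaviside step function. Fix $m$. Then the region of the $q$-plane with characteristic function $$P_m(q)=\prod_{k=m+N_a}^{m+N_b}\rho_k(q)$$ is a polygon contained in the parabolic region $q_2\ge q_1^2$ and having a vertex at the point $Q_m=(\kappa_m,\kappa_m^2)$. More precisely, this polygon is contained in the polygon with vertices $Q_m,Q_{m+1},\dots,Q_{m+N_b}$ (where $Q_l=(\kappa_l,\kappa_l^2)$), coincides with that polygon when $N_a=1$, and lies in the strip $\min_{m\le l\le m+N_b}\kappa_l\le q_1\le\max_{m\le l\le m+N_b}\kappa_l$.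
   Context: Indices of $\kappa$ are read modulo $\mathcal N$, i.e. $\kappa_{l+\mathcal N}=\kappa_l$ for all $l\in\mathbb Z$. *)

From HB Require Import structures.
From mathcomp Require Import all_boot all_order all_algebra.
From mathcomp Require Import boolp classical_sets reals.
Set Implicit Arguments. Unset Strict Implicit. Unset Printing Implicit Defensive.
Import Order.TTheory GRing.Theory Num.Theory.
Local Open Scope ring_scope.
Local Open Scope classical_set_scope.

(* Points q = (q_1, q_2) of the plane are pairs in R * R.
   kap : nat -> R is the sequence kappa, with indices read modulo
   N = Na + Nb (imposed as a periodicity hypothesis in the theorem). *)

Section Defs.
Variable R : realType.

(* Heaviside step function, convention theta(0) = 1 (closed region). *)
Definition heaviside (x : R) : R := if 0 <= x then 1 else 0.

Definition qmn (kap : nat -> R) (m n : nat) (q : R * R) : R :=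
  q.2 - (kap m + kap n) * q.1 + kap m * kap n.

Definition qtilde (kap : nat -> R) (m n : nat) (q : R * R) : R :=
  (kap m - kap n) * qmn kap m n q.

Definition rho (kap : nat -> R) (Na k : nat) (q : R * R) : R :=
  heaviside (qtilde kap k (k - Na) q) * heaviside (qtilde kap (k + Na) k q).

Definition Pm (kap : nat -> R) (Na Nb m : nat) (q : R * R) : R :=
  \prod_(m + Na <= k < (m + Nb).+1) rho kap Na k q.

Definition regionP (kap : nat -> R) (Na Nb m : nat) : set (R * R) :=
  [set q | Pm kap Na Nb m q = 1].

Definition Qpt (kap : nat -> R) (l : nat) : R * R := (kap l, kap l ^+ 2).

Definition Qpts (kap : nat -> R) (m Nb : nat) : seq (R * R) :=
  [seq Qpt kap l | l <- iota m Nb.+1].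

(* convex hull of a finite list of points = polygon with these vertices *)
Definition conv_hull (s : seq (R * R)) : set (R * R) :=
  [set q | exists w : 'I_(size s) -> R,
      (forall i, 0 <= w i) /\ \sum_i w i = 1 /\
      q = (\sum_i w i * (nth (0, 0) s i).1, \sum_i w i * (nth (0, 0) s i).2)].

Definition is_polygon (S : set (R * R)) : Prop :=
  (exists s : seq (R * R), S = conv_hull s) /\
  (exists (c : R * R) (e : R), 0 < e /\
     forall q : R * R, `|q.1 - c.1| < e -> `|q.2 - c.2| < e -> S q).

Definition is_vertex (S : set (R * R)) (v : R * R) : Prop :=
  S v /\ forall (x y : R * R) (t : R), S x -> S y -> 0 < t < 1 ->
    v = (t * x.1 + (1 - t) * y.1, t * x.2 + (1 - t) * y.2) -> x = v /\ y = v.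

End Defs.

From HB Require Import structures.
From mathcomp Require Import all_boot all_order all_algebra.
From mathcomp Require Import boolp classical_sets reals.
From mathcomp Require Import ring lra zify.
Import Order.TTheory GRing.Theory Num.Theory.
Local Open Scope ring_scope.
Local Open Scope classical_set_scope.
Set Implicit Arguments. Unset Strict Implicit. Unset Printing Implicit Defensive.

(* The sign of qtilde_{kl}(q) tells on which side of the chord Q_k Q_l of the
   parabola q_2 = q_1^2 the point q lies, so P_m cuts out an intersection of
   half-planes bounded by chords.  As kappa is increasing on 1..N and
   N-periodic, kappa_m, ..., kappa_(m+N-1) are cyclically ordered: every
   triple i < j < k has positive orientation
   (kappa_j - kappa_i)(kappa_k - kappa_i)(kappa_k - kappa_j).
   For q in the region, its side of the chord Q_m Q_(m+i) is nonnegative at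
   i = Na and nonpositive at i = Nb; at a sign change i -> i+1 a three-term
   Pluecker identity puts q in the triangle Q_m Q_(m+i) Q_(m+i+1).  This fan
   of triangles gives all the inclusions.  Q_m (and, when Na = 1, every Q_l)
   satisfies all the constraints, and is a vertex by strict convexity of the
   parabola.  A bounded intersection of finitely many half-planes is the
   convex hull of its vertices, and moving from Q_m towards the midpoint of
   Q_(m+Na) Q_(m+Nb) reaches interior points. *)

Lemma convex3_le (R : numDomainType) (a b c x y z M : R) :
  0 <= a -> 0 <= b -> 0 <= c -> a + b + c = 1 ->
  x <= M -> y <= M -> z <= M -> a * x + b * y + c * z <= M.
Proof.
move=> a0 b0 c0 abc xM yM zM; rewrite -[M]mul1r -abc !mulrDl.
by rewrite !lerD // ler_wpM2l.
Qed.

Lemma convex3_ge (R : numDomainType) (a b c x y z M : R) :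
  0 <= a -> 0 <= b -> 0 <= c -> a + b + c = 1 ->
  M <= x -> M <= y -> M <= z -> M <= a * x + b * y + c * z.
Proof.
move=> a0 b0 c0 abc xM yM zM; rewrite -[M]mul1r -abc !mulrDl.
by rewrite !lerD // ler_wpM2l.
Qed.

Lemma sum_indicator (R : pzSemiRingType) n (i0 : 'I_n) (h : 'I_n -> R) :
  \sum_(j < n) (j == i0)%:R * h j = h i0.
Proof.
rewrite (bigD1 i0) //= eqxx mul1r big1 ?addr0 // => j /negbTE ->.
by rewrite mul0r.
Qed.

Lemma seq_argmin (R : realDomainType) (T : eqType) (r : seq T) (h : T -> R) :
  r != [::] ->
  exists2 u, u \in r & forall v, v \in r -> h u <= h v.
Proof.
elim: r => // a r IH _; have [->|/IH[u ur Hu]] := eqVneq r [::].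
  by exists a => [|v]; rewrite ?inE // => /eqP ->.
have [hax|hxa] := leP (h a) (h u).
  exists a => [|v]; first exact: mem_head.
  by rewrite inE => /orP[/eqP -> //|/Hu]; apply: le_trans.
exists u => [|v]; first by rewrite inE ur orbT.
by rewrite inE => /orP[/eqP ->|/Hu //]; apply: ltW.
Qed.

Lemma seq_pos_lower_bound (R : realDomainType) (T : eqType) (r : seq T)
    (h : T -> R) :
  (forall u, u \in r -> 0 < h u) ->
  exists2 d, 0 < d & forall u, u \in r -> d <= h u.
Proof.
have [->|/(seq_argmin h)[u ur Hu] hpos] := eqVneq r [::]; first by exists 1.
by exists (h u); [apply: hpos|].
Qed.

Lemma sign_change (R : realDomainType) (g : nat -> R) a b : (a < b)%N ->
  0 <= g a -> g b <= 0 -> exists2 i, (a <= i < b)%N & 0 <= g i /\ g i.+1 <= 0.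
Proof.
elim: b => // b IH; rewrite ltnS leq_eqVlt => /orP[/eqP<- ga gb|ab ga gb].
  by exists a; rewrite ?leqnn.
have [gb0|/ltW gb0] := leP 0 (g b).
  by exists b; rewrite ?(ltnW ab) ?leqnn.
by have [i /andP[ai ib] gi] := IH ab ga gb0; exists i; rewrite // ai ltnW.
Qed.

Section ConvexHull.
Variable R : realType.
Implicit Types (s : seq (R * R)) (x y z q : R * R).

Definition triangle x y z : set (R * R) :=
  [set q | exists a b c : R, [/\ 0 <= a, 0 <= b, 0 <= c, a + b + c = 1 &
    q = (a * x.1 + b * y.1 + c * z.1, a * x.2 + b * y.2 + c * z.2)]].

Definition segment_point (t : R) x y : R * R :=
  (t * x.1 + (1 - t) * y.1, t * x.2 + (1 - t) * y.2).

Lemma triangle_fst_between x y z (lo hi : R) :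
  lo <= x.1 <= hi -> lo <= y.1 <= hi -> lo <= z.1 <= hi ->
  triangle x y z `<=` [set q | lo <= q.1 <= hi].
Proof.
move=> /andP[x1 x2] /andP[y1 y2] /andP[z1 z2] _ [a [b [c [a0 b0 c0 abc ->]]]] /=.
by rewrite convex3_ge ?convex3_le.
Qed.

Lemma triangle_norm_le x y z (M : R) :
  [/\ `|x.1| <= M, `|y.1| <= M & `|z.1| <= M] ->
  [/\ `|x.2| <= M, `|y.2| <= M & `|z.2| <= M] ->
  triangle x y z `<=` [set q | `|q.1| <= M /\ `|q.2| <= M].
Proof.
have norm3 (a b c u v w : R) : 0 <= a -> 0 <= b -> 0 <= c ->
    `|a * u + b * v + c * w| <= a * `|u| + b * `|v| + c * `|w|.
  move=> a0 b0 c0; apply: le_trans (ler_normD _ _) _.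
  rewrite lerD //; last by rewrite normrM ger0_norm.
  apply: le_trans (ler_normD _ _) _.
  by rewrite lerD // normrM ger0_norm.
move=> [x1 y1 z1] [x2 y2 z2] _ [a [b [c [a0 b0 c0 abc ->]]]] /=.
by split; apply: le_trans (norm3 _ _ _ _ _ _ a0 b0 c0) _; rewrite convex3_le.
Qed.

Lemma triangle_sub_conv_hull s i j k : (i < size s)%N -> (j < size s)%N ->
  (k < size s)%N ->
  triangle (nth (0, 0) s i) (nth (0, 0) s j) (nth (0, 0) s k) `<=` conv_hull s.
Proof.
move=> hi hj hk q [a [b [c [a0 b0 c0 abc ->]]]].
pose I := Ordinal hi; pose J := Ordinal hj; pose K := Ordinal hk.
pose w u := a * (u == I)%:R + b * (u == J)%:R + c * (u == K)%:R.
have sum_w (h : 'I_(size s) -> R) : \sum_u w u * h u = a * h I + b * h J + c * h K.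
  under eq_bigr => u _ do rewrite !mulrDl -!mulrA.
  by rewrite !big_split /= -!mulr_sumr !sum_indicator.
exists w; split; first by move=> u; rewrite !addr_ge0 // mulr_ge0.
split; last by rewrite !sum_w.
by under eq_bigr do rewrite -[w _]mulr1; rewrite sum_w !mulr1.
Qed.

Lemma conv_hull_nth s i : (i < size s)%N -> conv_hull s (nth (0, 0) s i).
Proof.
move=> hi; apply: (triangle_sub_conv_hull hi hi hi).
exists 1, 0, 0; split; rewrite ?addr0 //=.
by rewrite !mul0r !mul1r !addr0 -surjective_pairing.
Qed.

Lemma conv_hull_convex s x y t : conv_hull s x -> conv_hull s y -> 0 <= t <= 1 ->
  conv_hull s (segment_point t x y).
Proof.
move=> [w [w0 [w1 ->]]] [v [v0 [v1 ->]]] /andP[t0 t1].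
exists (fun i => t * w i + (1 - t) * v i); split.
  by move=> i; rewrite addr_ge0 // mulr_ge0 // subr_ge0.
split; first by rewrite big_split /= -!mulr_sumr w1 v1 !mulr1 addrC subrK.
by congr pair; rewrite !mulr_sumr -big_split; apply: eq_bigr => i _ /=; ring.
Qed.

End ConvexHull.

Section HalfPlanes.
Variable R : realType.
Implicit Types (s : seq (R * R)) (F : seq (R * R * R)) (f g : R * R * R)
  (x y p q : R * R).

Definition affine f q : R := f.1.1 * q.1 + f.1.2 * q.2 + f.2.

Definition halfplanes F : pred (R * R) := fun q => all (fun f => 0 <= affine f q) F.

Lemma affine_segment f t x y :
  affine f (segment_point t x y) = t * affine f x + (1 - t) * affine f y.
Proof. rewrite /affine /segment_point /=; ring. Qed.

Lemma conv_hull_sub_halfplanes F s :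
  {subset s <= halfplanes F} -> conv_hull s `<=` halfplanes F.
Proof.
move=> sF _ [w [w0 [w1 ->]]]; apply/allP => f fF.
pose u i := nth (0, 0) s i.
have -> : affine f (\sum_i w i * (u i).1, \sum_i w i * (u i).2) =
          \sum_i w i * affine f (u i).
  rewrite /affine /= !mulr_sumr -[X in _ + X]mulr1 -{1}w1 mulr_sumr -!big_split /=.
  by apply: eq_bigr => i _; ring.
apply: sumr_ge0 => i _; rewrite mulr_ge0 //.
by have /allP := sF _ (mem_nth (0, 0) (ltn_ord i)); apply.
Qed.

Definition slide f t p : R * R := (p.1 + t * f.1.2, p.2 - t * f.1.1).

Definition cross f g : R := g.1.1 * f.1.2 - g.1.2 * f.1.1.

Definition oppf f : R * R * R := ((- f.1.1, - f.1.2), - f.2).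

Definition nondegenerate f : bool := 0 < `|f.1.1| + `|f.1.2|.

Lemma affine_slide f g t p : affine g (slide f t p) = affine g p + t * cross f g.
Proof. rewrite /affine /slide /cross /=; ring. Qed.

Lemma cross_ff f : cross f f = 0.
Proof. by rewrite /cross mulrC subrr. Qed.

Lemma cross_oppf f g : cross (oppf f) g = - cross f g.
Proof. rewrite /cross /oppf /=; ring. Qed.

Lemma nondegenerate_oppf f : nondegenerate f -> nondegenerate (oppf f).
Proof. by rewrite /nondegenerate /= !normrN. Qed.

Lemma slide_escapes f p (M : R) : nondegenerate f ->
  ~ (forall t, 0 <= t -> `|(slide f t p).1| <= M /\ `|(slide f t p).2| <= M).
Proof.
move=> fnd bnd; have [p1M p2M] := bnd 0 (lexx 0).
pose t := (`|p.1| + `|p.2| + 2 * M + 1) / (`|f.1.1| + `|f.1.2|).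
have M0 : 0 <= M := le_trans (normr_ge0 _) p1M.
have t0 : 0 <= t by rewrite divr_ge0 ?addr_ge0 ?mulr_ge0 // ltW.
have [/= h1 h2] := bnd t t0.
have e1 : t * `|f.1.2| <= M + `|p.1|.
  have -> : t * `|f.1.2| = `|(p.1 + t * f.1.2) - p.1|.
    by rewrite addrC addKr normrM ger0_norm.
  by apply: le_trans (ler_normB _ _) _; apply: lerD.
have e2 : t * `|f.1.1| <= M + `|p.2|.
  have -> : t * `|f.1.1| = `|p.2 - (p.2 - t * f.1.1)|.
    by rewrite opprB addrC subrK normrM ger0_norm.
  by apply: le_trans (ler_normB _ _) _; rewrite addrC; apply: lerD.
have : t * (`|f.1.1| + `|f.1.2|) = `|p.1| + `|p.2| + 2 * M + 1.
  by rewrite divfK // gt_eqF.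
lra.
Qed.

Lemma slide_to_boundary F f p (M : R) :
  (forall q, halfplanes F q -> `|q.1| <= M /\ `|q.2| <= M) ->
  halfplanes F p -> nondegenerate f ->
  exists2 g, g \in F & exists2 t, 0 <= t &
    [/\ halfplanes F (slide f t p), affine g (slide f t p) = 0 & cross f g != 0].
Proof.
move=> bnd /allP Fp fnd.
have [G0|GN] := eqVneq [seq g <- F | cross f g < 0] [::].
  exfalso; apply: (slide_escapes (p := p) (M := M) fnd) => t t0; apply: bnd.
  apply/allP => g gF; rewrite affine_slide addr_ge0 ?Fp // mulr_ge0 // leNgt.
  apply/negP => neg; have : g \in [seq g <- F | cross f g < 0].
    by rewrite mem_filter neg gF.
  by rewrite G0.
have [g] := seq_argmin (fun g => affine g p / - cross f g) GN.
rewrite mem_filter => /andP[gneg gF] gmin.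
have t0 : 0 <= affine g p / - cross f g by rewrite divr_ge0 ?Fp // oppr_ge0 ltW.
exists g => //; exists (affine g p / - cross f g) => //.
split; last by rewrite lt_eqF.
- apply/allP => h hF; rewrite affine_slide.
  have [hneg|hpos] := ltP (cross f h) 0; last by rewrite addr_ge0 ?Fp // mulr_ge0.
  have := gmin h; rewrite mem_filter hneg hF => /(_ isT).
  by rewrite ler_pdivlMr ?oppr_gt0 // mulrN => ?; lra.
- by rewrite affine_slide; field; rewrite ?oppr_eq0 lt_eqF.
Qed.

Definition meet_point f g : R * R :=
  ((f.2 * g.1.2 - g.2 * f.1.2) / cross f g, (f.1.1 * g.2 - g.1.1 * f.2) / cross f g).

Lemma meet_pointP f g p : affine f p = 0 -> affine g p = 0 -> cross f g != 0 ->
  p = meet_point f g.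
Proof.
case: p => x y Ef Eg nz; rewrite /meet_point.
have Ex : f.1.2 * affine g (x, y) - g.1.2 * affine f (x, y) = 0 by rewrite Ef Eg; ring.
have Ey : f.1.1 * affine g (x, y) - g.1.1 * affine f (x, y) = 0 by rewrite Ef Eg; ring.
rewrite -[x](mulfK nz) -[y](mulfK nz); congr (_ / _, _ / _);
  move: Ex Ey; rewrite /affine /cross /= => ? ?; lra.
Qed.

(* For parallel lines [meet_point] is a junk point; keeping only feasible
   points makes such junk harmless. *)
Definition vertices F : seq (R * R) :=
  [seq p <- [seq meet_point f g | f <- F, g <- F] | halfplanes F p].

Lemma vertices_sub F : {subset vertices F <= halfplanes F}.
Proof. by move=> p; rewrite mem_filter => /andP[]. Qed.

Lemma meet_point_in_hull F f g p : f \in F -> g \in F -> halfplanes F p ->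
  affine f p = 0 -> affine g p = 0 -> cross f g != 0 -> conv_hull (vertices F) p.
Proof.
move=> fF gF Fp Ef Eg nz.
have pV : p \in vertices F by rewrite mem_filter Fp (meet_pointP Ef Eg nz) allpairs_f.
by rewrite -(nth_index (0, 0) pV); apply: conv_hull_nth; rewrite index_mem.
Qed.

Lemma conv_hull_between_slides s f p (t1 t2 : R) : 0 <= t1 -> 0 <= t2 ->
  conv_hull s (slide f t1 p) -> conv_hull s (slide (oppf f) t2 p) -> conv_hull s p.
Proof.
move=> t10 t20 H1 H2; have [t12|t12] := eqVneq (t1 + t2) 0.
  have t1z : t1 = 0 by lra.
  by move: H1; rewrite t1z /slide !mul0r addr0 subr0 -surjective_pairing.
have lam : 0 <= t2 / (t1 + t2) <= 1.
  by rewrite divr_ge0 ?addr_ge0 //= ler_pdivrMr ?mul1r ?lerDr // lt_def t12 addr_ge0.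
have := conv_hull_convex H1 H2 lam; congr conv_hull.
by case: p {H1 H2} => x y; rewrite /segment_point /slide /oppf /=; congr pair; field.
Qed.

Section BoundedPolygon.
Variables (F : seq (R * R * R)) (M : R).
Hypothesis F_nondeg : forall f, f \in F -> nondegenerate f.
Hypothesis F_bounded : forall q, halfplanes F q -> `|q.1| <= M /\ `|q.2| <= M.

Lemma boundary_in_hull f p : f \in F -> halfplanes F p -> affine f p = 0 ->
  conv_hull (vertices F) p.
Proof.
move=> fF Fp Ef; have fnd := F_nondeg fF.
have [g1 g1F [t1 t10 [F1 E1 nz1]]] := slide_to_boundary F_bounded Fp fnd.
have [g2 g2F [t2 t20 [F2 E2 nz2]]] :=
  slide_to_boundary F_bounded Fp (nondegenerate_oppf fnd).
apply: (conv_hull_between_slides (f := f) t10 t20).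
  apply: (meet_point_in_hull fF g1F F1) => //.
  by rewrite affine_slide Ef cross_ff mulr0 addr0.
apply: (meet_point_in_hull fF g2F F2) => //.
  by rewrite affine_slide Ef cross_oppf cross_ff oppr0 mulr0 addr0.
by move: nz2; rewrite cross_oppf oppr_eq0.
Qed.

(* Slide q vertically to two boundary points, and each of these along its
   edge to two vertices. *)
Lemma halfplanes_conv_hull_vertices q : halfplanes F q <-> conv_hull (vertices F) q.
Proof.
split=> [Fq|]; last exact: conv_hull_sub_halfplanes (@vertices_sub F) q.
pose f0 : R * R * R := ((1, 0), 0).
have f0nd : nondegenerate f0 by rewrite /nondegenerate /= normr1 normr0 addr0.
have [g1 g1F [t1 t10 [F1 E1 _]]] := slide_to_boundary F_bounded Fq f0nd.
have [g2 g2F [t2 t20 [F2 E2 _]]] :=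
  slide_to_boundary F_bounded Fq (nondegenerate_oppf f0nd).
apply: (conv_hull_between_slides (f := f0) t10 t20).
  exact: boundary_in_hull g1F F1 E1.
exact: boundary_in_hull g2F F2 E2.
Qed.

End BoundedPolygon.

Lemma strict_point_box F c : (forall f, f \in F -> 0 < affine f c) ->
  exists2 e : R, 0 < e & forall q : R * R,
    `|q.1 - c.1| < e -> `|q.2 - c.2| < e -> halfplanes F q.
Proof.
move=> Fc; pose h f := affine f c / (`|f.1.1| + `|f.1.2| + 1).
have hden f : 0 < `|f.1.1| + `|f.1.2| + 1 by rewrite ltr_wpDl ?addr_ge0.
have [e e0 He] : exists2 e, 0 < e & forall f, f \in F -> e <= h f.
  by apply: seq_pos_lower_bound => f fF; rewrite divr_gt0 ?Fc.
exists e => // q h1 h2; apply/allP => f fF.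
have := He f fF; rewrite ler_pdivlMr //.
have -> : affine f q = affine f c + f.1.1 * (q.1 - c.1) + f.1.2 * (q.2 - c.2).
  by rewrite /affine; ring.
have b1 : `|f.1.1 * (q.1 - c.1)| <= `|f.1.1| * e by rewrite normrM ler_wpM2l // ltW.
have b2 : `|f.1.2 * (q.2 - c.2)| <= `|f.1.2| * e by rewrite normrM ler_wpM2l // ltW.
have := ler_norm (- (f.1.1 * (q.1 - c.1))); have := ler_norm (- (f.1.2 * (q.2 - c.2))).
rewrite !normrN; nra.
Qed.

(* Moving from p slightly towards r makes the constraints active at p strict
   while keeping the inactive ones positive. *)
Lemma halfplanes_open_box F p r : (forall f, f \in F -> 0 <= affine f p) ->
  (forall f, f \in F -> affine f p = 0 -> 0 < affine f r) ->
  exists c : R * R, exists2 e : R, 0 < e & forall q : R * R,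
    `|q.1 - c.1| < e -> `|q.2 - c.2| < e -> halfplanes F q.
Proof.
move=> Fp Fr.
pose h f := if 0 < affine f p
  then affine f p / (2 * (affine f p + `|affine f r|)) else 1.
have [d d0 Hd] : exists2 d, 0 < d & forall f, f \in F -> d <= h f.
  apply: seq_pos_lower_bound => f fF; rewrite /h; case: ifP => // fp.
  by rewrite divr_gt0 // mulr_gt0 // ltr_wpDr.
exists (segment_point d r p); apply: strict_point_box => f fF.
rewrite affine_segment; have := Hd f fF; rewrite /h.
have [fp|fp0] := ltP 0 (affine f p); last first.
  have fz : affine f p = 0 by apply/eqP; rewrite eq_le fp0 Fp.
  by move=> _; rewrite fz mulr0 addr0 mulr_gt0 ?Fr.
have den : 0 < 2 * (affine f p + `|affine f r|) by rewrite mulr_gt0 // ltr_wpDr.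
rewrite ler_pdivlMr // => dle.
have := ler_norm (- affine f r); rewrite normrN; nra.
Qed.

End HalfPlanes.

Section Parabola.
Variable R : realType.
Implicit Types (a b c d t : R) (q : R * R).

Definition parab t : R * R := (t, t ^+ 2).

Definition orient a b c : R := (b - a) * (c - a) * (c - b).

Definition chord_side a b q : R := (b - a) * (q.2 - (a + b) * q.1 + a * b).

Definition chord_form a b : R * R * R :=
  ((- (b - a) * (a + b), b - a), (b - a) * (a * b)).

Lemma orient_rot a b c : orient a b c = orient b c a.
Proof. rewrite /orient; ring. Qed.

Lemma orient_gt0 a b c : a < b -> b < c -> 0 < orient a b c.
Proof. by move=> ab bc; rewrite !mulr_gt0 ?subr_gt0 // (lt_trans ab). Qed.

Lemma orient_neq a b c : 0 < orient a b c -> [/\ a != b, a != c & b != c].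
Proof.
rewrite /orient lt_def !mulf_eq0 !negb_or !subr_eq0 => /andP[/andP[/andP[ba ca] cb] _].
by split; rewrite eq_sym.
Qed.

Lemma affine_chord_form a b q : affine (chord_form a b) q = chord_side a b q.
Proof. rewrite /affine /chord_form /chord_side /=; ring. Qed.

Lemma chord_form_nondegenerate a b : a != b -> nondegenerate (chord_form a b).
Proof. by move=> ab; rewrite /nondegenerate /= ltr_wpDl // normr_gt0 subr_eq0 eq_sym. Qed.

Lemma qtilde_chord_side (kap : nat -> R) k l q :
  qtilde kap k l q = chord_side (kap l) (kap k) q.
Proof. rewrite /qtilde /qmn /chord_side; ring. Qed.

Lemma chord_side_parab a b t : chord_side a b (parab t) = orient a b t.
Proof. rewrite /chord_side /orient /=; ring. Qed.

Lemma chord_sideC a b q : chord_side a b q = - chord_side b a q.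
Proof. rewrite /chord_side; ring. Qed.

Lemma chord_side_exchange a b c d q : orient a b d * chord_side c d q =
  orient a c d * chord_side b d q - orient b c d * chord_side a d q.
Proof. rewrite /orient /chord_side; ring. Qed.

(* The barycentric coordinates of q in the triangle with vertices on the
   parabola are its chord sides, divided by the orientation. *)
Lemma parab_triangle a b c q : 0 < orient a b c ->
  0 <= chord_side b c q -> 0 <= chord_side c a q -> 0 <= chord_side a b q ->
  triangle (parab a) (parab b) (parab c) q.
Proof.
move=> D0 ha hb hc; have [ab ac bc] := orient_neq D0.
exists (chord_side b c q / orient a b c), (chord_side c a q / orient a b c),
  (chord_side a b q / orient a b c).
have [ab' ac' bc'] : [/\ b - a != 0, c - a != 0 & c - b != 0].
  by rewrite !subr_eq0; split; rewrite eq_sym.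
have D0' := ltW D0.
split; rewrite ?divr_ge0 //.
  by rewrite /chord_side /orient; field; rewrite ab' ac' bc'.
by case: q {ha hb hc} => x y; rewrite /chord_side /orient /=; congr pair; field;
  rewrite ab' ac' bc'.
Qed.

Lemma triangle_parab_sub_epigraph a b c :
  triangle (parab a) (parab b) (parab c) `<=` [set q | q.1 ^+ 2 <= q.2].
Proof.
move=> _ [u [v [w [u0 v0 w0 uvw ->]]]] /=.
have -> : w = 1 - u - v by lra.
have {}w0 : 0 <= 1 - u - v by lra.
rewrite -subr_ge0.
have -> : u * a ^+ 2 + v * b ^+ 2 + (1 - u - v) * c ^+ 2 -
    (u * a + v * b + (1 - u - v) * c) ^+ 2 = u * v * (a - b) ^+ 2 +
    u * (1 - u - v) * (a - c) ^+ 2 + v * (1 - u - v) * (b - c) ^+ 2.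
  by ring.
by rewrite !addr_ge0 // mulr_ge0 ?sqr_ge0 // mulr_ge0.
Qed.

(* Strict convexity of t |-> t ^+ 2. *)
Lemma epigraph_vertex (S : set (R * R)) t :
  S `<=` [set q | q.1 ^+ 2 <= q.2] -> S (parab t) -> is_vertex S (parab t).
Proof.
move=> Sepi St; split=> // -[x1 x2] [y1 y2] s Sx Sy /andP[s0 s1] [E1 E2].
have /= px := Sepi _ Sx; have /= py := Sepi _ Sy.
have s1' : 0 < 1 - s by rewrite subr_gt0.
have gap : s * (1 - s) * (x1 - y1) ^+ 2 <= 0.
  have -> : s * (1 - s) * (x1 - y1) ^+ 2 =
      s * x1 ^+ 2 + (1 - s) * y1 ^+ 2 - (s * x1 + (1 - s) * y1) ^+ 2 by ring.
  by rewrite -E1 E2 subr_le0 lerD // ler_wpM2l // ltW.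
have /eqP : (x1 - y1) ^+ 2 = 0.
  by apply/eqP; rewrite eq_le sqr_ge0 andbT -(pmulr_rle0 _ (mulr_gt0 s0 s1')).
rewrite sqrf_eq0 subr_eq0 => /eqP xy; subst y1.
have x1t : x1 = t by rewrite E1; ring.
subst x1; have h2 : s * (x2 - t ^+ 2) + (1 - s) * (y2 - t ^+ 2) = 0.
  by rewrite E2; ring.
have hx : 0 <= s * (x2 - t ^+ 2) by rewrite mulr_ge0 ?subr_ge0 // ltW.
have hy : 0 <= (1 - s) * (y2 - t ^+ 2) by rewrite mulr_ge0 ?subr_ge0 // ltW.
have /eqP : s * (x2 - t ^+ 2) = 0 by lra.
have /eqP : (1 - s) * (y2 - t ^+ 2) = 0 by lra.
by rewrite !mulf_eq0 (gt_eqF s0) (gt_eqF s1') /= !subr_eq0 => /eqP-> /eqP->.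
Qed.

End Parabola.

Lemma prod_heaviside_eq1 (R : realType) (r : seq nat) (x y : nat -> R) :
  \prod_(k <- r) (heaviside (x k) * heaviside (y k)) = 1 <->
  (forall k, k \in r -> 0 <= x k /\ 0 <= y k).
Proof.
elim: r => [|a r IH]; first by rewrite big_nil.
rewrite big_cons /heaviside; split.
  case: ifP => xa; case: ifP => ya; rewrite ?(mul0r, mulr0, mul1r) => prod1;
    try by move: (oner_neq0 R); rewrite prod1 eqxx.
  by move=> k; rewrite inE => /orP[/eqP->|/(proj1 IH prod1)].
move=> H; have [-> ->] := H a (mem_head _ _); rewrite !mul1r.
by apply/IH => k kr; apply: H; rewrite inE kr orbT.
Qed.

Section CyclicOrder.
Variables (R : realType) (N : nat) (u : nat -> R).
Hypothesis u_periodic : forall l, u (l + N)%N = u l.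

Definition cyclically_ordered (v : nat -> R) : Prop := forall i j k,
  (i < j)%N -> (j < k)%N -> (k < N)%N -> 0 < orient (v i) (v j) (v k).

Lemma increasing_cyclically_ordered :
  (forall i j, (1 <= i)%N -> (i < j)%N -> (j <= N)%N -> u i < u j) ->
  cyclically_ordered u.
Proof.
move=> mono i j k ij jk kN; have [i0|i0] := posnP i.
  by rewrite i0 -(u_periodic 0%N) add0n orient_rot orient_gt0 ?mono //; lia.
by rewrite orient_gt0 ?mono //; lia.
Qed.

Lemma cyclically_ordered_shift m :
  cyclically_ordered (fun i => u (m + i)%N) ->
  cyclically_ordered (fun i => u (m.+1 + i)%N).
Proof.
move=> cu i j k ij jk kN; rewrite !addSnnS.
have [kN'|kN'] := ltnP k.+1 N; first exact: cu.
have -> : (m + k.+1 = m + 0 + N)%N by lia.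
by rewrite u_periodic -orient_rot cu //; lia.
Qed.

Lemma cyclically_ordered_rotate m :
  cyclically_ordered u -> cyclically_ordered (fun i => u (m + i)%N).
Proof.
by move=> cu; elim: m => [|m IH]; [exact: cu | exact: cyclically_ordered_shift].
Qed.

End CyclicOrder.

Section Region.
Variables (R : realType) (Na Nb : nat) (kap : nat -> R) (m : nat).
Hypothesis Na_gt0 : (1 <= Na)%N.
Hypothesis Na_lt_Nb : (Na < Nb)%N.
Hypothesis kap_periodic : forall l : nat, kap (l + (Na + Nb))%N = kap l.
Hypothesis kap_increasing : forall i j : nat,
  (1 <= i)%N -> (i < j)%N -> (j <= Na + Nb)%N -> kap i < kap j.

Local Notation N := (Na + Nb)%N.
Local Notation U i := (kap (m + i)%N).

Lemma U_N : U N = U 0.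
Proof. by rewrite addn0 kap_periodic. Qed.

Lemma orient_U_gt0 i j k : (i < j)%N -> (j < k)%N -> (k < N)%N ->
  0 < orient (U i) (U j) (U k).
Proof.
move: i j k; apply: (cyclically_ordered_rotate kap_periodic).
exact: increasing_cyclically_ordered.
Qed.

Lemma orient_U_ge0 i j k : (i <= j)%N -> (j <= k)%N -> (k < N)%N ->
  0 <= orient (U i) (U j) (U k).
Proof.
rewrite leq_eqVlt => /orP[/eqP->|ij]; first by rewrite /orient subrr !mul0r.
rewrite leq_eqVlt => /orP[/eqP->|jk] kN; first by rewrite /orient subrr mulr0.
exact/ltW/orient_U_gt0.
Qed.

Lemma U_neq i j : (i < j)%N -> (j < N)%N -> U i != U j.
Proof.
move=> ij jN; have [jN1|jN1] := ltnP j.+1 N.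
  by have [] := orient_neq (orient_U_gt0 ij (ltnSn j) jN1).
have [->|i0] := posnP i.
  by have [] := orient_neq (@orient_U_gt0 0 1 j isT ltac:(lia) jN).
by have [] := orient_neq (orient_U_gt0 i0 ij jN).
Qed.

Definition feasible (q : R * R) : Prop := forall i, (Na <= i <= Nb)%N ->
  0 <= chord_side (U (i - Na)) (U i) q /\ 0 <= chord_side (U i) (U (i + Na)) q.

Lemma regionP_feasible q : regionP kap Na Nb m q <-> feasible q.
Proof.
rewrite /regionP /Pm /rho /= prod_heaviside_eq1; split=> H i.
  move=> hi; have := H (m + i)%N; rewrite mem_index_iota !qtilde_chord_side addnA.
  by rewrite (_ : m + i - Na = m + (i - Na))%N; [apply; lia | lia].
rewrite mem_index_iota => hi; have := H (i - m)%N ltac:(lia).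
have -> : (m + (i - m) = i)%N by lia.
have -> : (m + (i - m - Na) = i - Na)%N by lia.
have -> : (m + (i - m + Na) = i + Na)%N by lia.
by rewrite !qtilde_chord_side; apply.
Qed.

Definition constraints : seq (R * R * R) :=
  [seq chord_form (U (i - Na)) (U i) | i <- index_iota Na Nb.+1] ++
  [seq chord_form (U i) (U (i + Na)) | i <- index_iota Na Nb.+1].

Lemma halfplanes_constraints q : halfplanes constraints q <-> feasible q.
Proof.
rewrite /halfplanes all_cat !all_map; split.
  move=> /andP[/allP H1 /allP H2] i hi.
  have hi' : i \in index_iota Na Nb.+1 by rewrite mem_index_iota; lia.
  by have := H1 i hi'; have := H2 i hi'; rewrite /= !affine_chord_form.
move=> H; apply/andP; split; apply/allP => i; rewrite mem_index_iota => hi /=;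
  by rewrite affine_chord_form; have [] := H i ltac:(lia).
Qed.

Lemma constraints_nondegenerate f : f \in constraints -> nondegenerate f.
Proof.
rewrite mem_cat => /orP[] /mapP[i]; rewrite mem_index_iota => hi ->;
  apply: chord_form_nondegenerate; first by apply: U_neq; lia.
have [iN|iN] := ltnP (i + Na) N; first by apply: U_neq; lia.
have -> : (i + Na = N)%N by lia.
by rewrite U_N eq_sym U_neq //; lia.
Qed.

Lemma feasible_fan_triangle q : feasible q -> exists2 i, (Na <= i < Nb)%N &
  triangle (parab (U 0)) (parab (U i)) (parab (U i.+1)) q.
Proof.
move=> Fq; pose g i := chord_side (U 0) (U i) q.
have gNa : 0 <= g Na by have [] := Fq Na ltac:(lia); rewrite subnn.
have gNb : g Nb <= 0.
  by have [_] := Fq Nb ltac:(lia); rewrite (addnC Nb) U_N chord_sideC oppr_ge0.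
have [i /andP[i1 i2] [gi gi1]] := sign_change Na_lt_Nb gNa gNb.
exists i; first by rewrite i1.
have Dp : 0 < orient (U 0) (U i) (U i.+1) by apply: orient_U_gt0; lia.
apply: parab_triangle => //; last by rewrite chord_sideC oppr_ge0.
have [+ _] := Fq i.+1 ltac:(lia); set j := (i.+1 - Na)%N => side_j.
have Dj : 0 < orient (U 0) (U j) (U i.+1) by apply: orient_U_gt0; lia.
rewrite -(pmulr_rge0 _ Dj) chord_side_exchange subr_ge0.
apply: (@le_trans _ _ 0).
  by rewrite mulr_ge0_le0 // orient_U_ge0 //; lia.
by rewrite mulr_ge0 // ltW.
Qed.

Lemma chord_side_U_parab_ge0 j k l : (j < k)%N -> (k <= N)%N ->
  (l <= j)%N \/ (k <= l < N)%N -> 0 <= chord_side (U j) (U k) (parab (U l)).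
Proof.
move=> jk kN hl; rewrite chord_side_parab.
have [kN'|kN'] := ltnP k N.
  case: hl => [lj|/andP[kl lN]]; last by apply: orient_U_ge0; lia.
  by rewrite -orient_rot; apply: orient_U_ge0; lia.
rewrite (_ : k = N) ?U_N; last lia.
by rewrite orient_rot; apply: orient_U_ge0; lia.
Qed.

Lemma feasible_parab_U0 : feasible (parab (U 0)).
Proof. by move=> i hi; split; apply: chord_side_U_parab_ge0; lia. Qed.

Lemma feasible_parab_U l : Na = 1%N -> (l <= Nb)%N -> feasible (parab (U l)).
Proof. by move=> Na1 lNb i hi; split; apply: chord_side_U_parab_ge0; lia. Qed.

(* Every constraint active at Q_m is strict at the midpoint of Q_(m+Na) and
   Q_(m+Nb). *)
Lemma feasible_open_box : exists c : R * R, exists2 e : R, 0 < e &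
  forall q : R * R, `|q.1 - c.1| < e -> `|q.2 - c.2| < e -> feasible q.
Proof.
pose r := segment_point (1 / 2) (parab (U Na)) (parab (U Nb)).
have D : 0 < orient (U 0) (U Na) (U Nb) by apply: orient_U_gt0; lia.
have side_r a b : chord_side a b r =
    1 / 2 * orient a b (U Na) + (1 - 1 / 2) * orient a b (U Nb).
  by rewrite -affine_chord_form affine_segment !affine_chord_form !chord_side_parab.
have Fp f : f \in constraints -> 0 <= affine f (parab (U 0)).
  by have /halfplanes_constraints/allP := feasible_parab_U0; apply.
have Fr f : f \in constraints -> affine f (parab (U 0)) = 0 -> 0 < affine f r.
  rewrite mem_cat => /orP[] /mapP[i]; rewrite mem_index_iota => hi ->;
    rewrite !affine_chord_form side_r chord_side_parab.
  - have [->|iNa] := eqVneq i Na.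
      rewrite subnn [orient _ (U Na) (U Na)]/orient subrr mulr0 mulr0 add0r => _.
      by rewrite mulr_gt0 //; lra.
    move=> act; have := @orient_U_gt0 0 (i - Na) i ltac:(lia) ltac:(lia) ltac:(lia).
    by rewrite orient_rot act ltxx.
  - have [iN|iN] := ltnP (i + Na) N.
      move=> act; have := @orient_U_gt0 0 i (i + Na) ltac:(lia) ltac:(lia) iN.
      by rewrite orient_rot act ltxx.
    have -> : i = Nb by lia.
    rewrite (addnC Nb) U_N [orient _ _ (U Nb)]/orient subrr mulr0 mul0r mulr0 addr0 => _.
    by rewrite orient_rot mulr_gt0 //; lra.
have [c [e e0 box]] := halfplanes_open_box Fp Fr.
by exists c, e => // q h1 h2; apply/halfplanes_constraints/box.
Qed.

Lemma feasible_bounded : exists M : R, forall q, feasible q ->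
  `|q.1| <= M /\ `|q.2| <= M.
Proof.
pose M := \sum_(l < Nb.+1) (`|U l| + `|U l ^+ 2|).
have UM l : (l <= Nb)%N -> `|U l| <= M /\ `|U l ^+ 2| <= M.
  move=> lNb; have sumM : `|U l| + `|U l ^+ 2| <= M.
    rewrite /M (bigD1 (Ordinal (_ : l < Nb.+1)%N)) ?ltnS //= lerDl.
    by apply: sumr_ge0 => k _; rewrite addr_ge0.
  by split; apply: le_trans sumM; rewrite ?lerDl ?lerDr.
exists M => q /feasible_fan_triangle[i /andP[_ iNb] qT].
have [a1 a2] := UM 0%N isT; have [b1 b2] := UM i (ltnW iNb).
have [c1 c2] := UM i.+1 iNb.
exact: (triangle_norm_le _ _ qT).
Qed.

Lemma nth_Qpts l : (l <= Nb)%N -> nth (0, 0) (Qpts kap m Nb) l = parab (U l).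
Proof. by move=> lNb; rewrite (nth_map 0%N) ?size_iota ?nth_iota. Qed.

Lemma size_Qpts : size (Qpts kap m Nb) = Nb.+1.
Proof. by rewrite size_map size_iota. Qed.

Lemma regionP_polygon : is_polygon (regionP kap Na Nb m).
Proof.
have [M bnd] := feasible_bounded.
have F_bounded q : halfplanes constraints q -> `|q.1| <= M /\ `|q.2| <= M.
  by move/halfplanes_constraints/bnd.
have hull_eq := halfplanes_conv_hull_vertices constraints_nondegenerate F_bounded.
split.
  exists (vertices constraints); apply/seteqP; split=> q.
    by move/regionP_feasible/halfplanes_constraints/hull_eq.
  by move/hull_eq/halfplanes_constraints/regionP_feasible.
have [c [e e0 box]] := feasible_open_box.
by exists c, e; split=> // q h1 h2; apply/regionP_feasible/box.
Qed.

Lemma regionP_sub_epigraph : regionP kap Na Nb m `<=` [set q | q.1 ^+ 2 <= q.2].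
Proof.
by move=> q /regionP_feasible/feasible_fan_triangle[i _ /triangle_parab_sub_epigraph].
Qed.

Lemma regionP_vertex : is_vertex (regionP kap Na Nb m) (Qpt kap m).
Proof.
have -> : Qpt kap m = parab (U 0) by rewrite /Qpt addn0.
apply: epigraph_vertex regionP_sub_epigraph _.
exact/regionP_feasible/feasible_parab_U0.
Qed.

Lemma regionP_sub_hull : regionP kap Na Nb m `<=` conv_hull (Qpts kap m Nb).
Proof.
move=> q /regionP_feasible/feasible_fan_triangle[i /andP[_ iNb] qT].
have := @triangle_sub_conv_hull _ (Qpts kap m Nb) 0 i i.+1.
by rewrite size_Qpts !nth_Qpts ?(ltnW iNb) //; apply=> //; lia.
Qed.

Lemma regionP_eq_hull : Na = 1%N -> regionP kap Na Nb m = conv_hull (Qpts kap m Nb).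
Proof.
move=> Na1; apply/seteqP; split; first exact: regionP_sub_hull.
move=> q /(conv_hull_sub_halfplanes (F := constraints)) Fq.
apply/regionP_feasible/halfplanes_constraints/Fq => x /mapP[l].
rewrite mem_iota => hl ->; apply/halfplanes_constraints.
have ml : (m <= l)%N by lia.
have -> : Qpt kap l = parab (U (l - m)) by rewrite /Qpt subnKC.
by apply: feasible_parab_U => //; lia.
Qed.

Lemma regionP_strip : regionP kap Na Nb m `<=`
  [set q | \big[Order.min/kap m]_(m <= l < (m + Nb).+1) kap l <= q.1 <=
           \big[Order.max/kap m]_(m <= l < (m + Nb).+1) kap l].
Proof.
move=> q /regionP_feasible/feasible_fan_triangle[i /andP[i1 i2]].
have between l : (l <= Nb)%N ->
    \big[Order.min/kap m]_(m <= l < (m + Nb).+1) kap l <= U l <=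
    \big[Order.max/kap m]_(m <= l < (m + Nb).+1) kap l.
  move=> lNb; rewrite ge_bigmin_seq ?le_bigmax_seq // mem_index_iota; lia.
by apply: triangle_fst_between; rewrite ?between // ltnW.
Qed.

End Region.

Theorem lemma5p1 (R : realType) (Na Nb : nat) (kap : nat -> R) (m : nat) :
  (1 <= Na)%N -> (Na < Nb)%N ->
  (forall l : nat, kap (l + (Na + Nb))%N = kap l) ->
  (forall i j : nat, (1 <= i)%N -> (i < j)%N -> (j <= Na + Nb)%N -> kap i < kap j) ->
  is_polygon (regionP kap Na Nb m) /\
  regionP kap Na Nb m `<=` [set q | q.1 ^+ 2 <= q.2] /\
  is_vertex (regionP kap Na Nb m) (Qpt kap m) /\
  regionP kap Na Nb m `<=` conv_hull (Qpts kap m Nb) /\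
  (Na = 1%N -> regionP kap Na Nb m = conv_hull (Qpts kap m Nb)) /\
  regionP kap Na Nb m `<=`
    [set q | \big[Order.min/kap m]_(m <= l < (m + Nb).+1) kap l <= q.1 <=
             \big[Order.max/kap m]_(m <= l < (m + Nb).+1) kap l].
Proof.
move=> Na_gt0 Na_lt_Nb kap_periodic kap_increasing.
split; first exact: regionP_polygon.
split; first exact: regionP_sub_epigraph.
split; first exact: regionP_vertex.
split; first exact: regionP_sub_hull.
split; first exact: regionP_eq_hull.
exact: regionP_strip.
Qed.
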